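(* Let $r\ge 2$ and let $S$ be a mutual-visibility set of the glued binary tree $GT(r)$. If $|S\cap V_r^{(1)}|\ge 2$, then to each vertex $v\in S\cap V_r^{(1)}$ one can assign a pair of twin quasi-leaves belonging to $T_v$ and not belonging to $S$, in such a way that the pairs assigned to distinct vertices of $S\cap V_r^{(1)}$ are pairwise disjoint.
   Context: A perfect binary tree of depth $r\ge1$ is a rooted tree in which every non-leaf vertex has exactly $2$ children and all leaves have depth $r$. The glued binary tree $GT(r)$ is obtained from two copies $T_r^{(1)}$ and $T_r^{(2)}$ of the perfect binary tree of depth $r$ by pairwise identifying their leaves (via a fixed isomorphism of the copies). The identified vertices are the quasi-leaves; $L(GT(r))=V(T_r^{(1)})\cap V(T_r^{(2)})$ is the set of quasi-leaves, and $V_r^{(i)}=V(T_r^{(i)})\setminus L(GT(r))$ for $i\in\{1,2\}$. Two quasi-leaves $u,v$ with $N(u)=N(v)$ are twin quasi-leaves. For a vertex $u\in V_r^{(1)}$ (resp. $V_r^{(2)}$), $T_u$ denotes the subtree of $T_r^{(1)}$ (resp. $T_r^{(2)}$) rooted at $u$ consisting of $u$ and all its descendants, its leaves being the quasi-leaves that are descendants of $u$. For $S\subseteq V(G)$, two vertices $u,v$ are $S$-visible if there exists a shortest $u,v$-path $P$ with $V(P)\cap S\subseteq\{u,v\}$; $S$ is a mutual-visibility set if every two vertices of $S$ are $S$-visible. *)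

From mathcomp Require Import all_boot.
Set Implicit Arguments. Unset Strict Implicit. Unset Printing Implicit Defensive.

(* Vertices of a perfect binary tree of depth r are encoded by heap indices
   h in [1, 2^(r+1)): root = 1, children of h are 2h and 2h+1, depth of h is
   floor(log2 h), leaves are the h with 2^r <= h < 2^(r+1).
   A vertex of GT(r) is a pair (c, h): c = true means copy T^(1), c = false
   means copy T^(2).  Quasi-leaves (the identified leaves) are represented
   only with c = false (the identification is the identity on heap indices). *)

Definition gt_valid (r : nat) (x : bool * 'I_(2 ^ r.+1)) : bool :=
  (1 <= val x.2) && ((val x.2 < 2 ^ r) || ~~ x.1).

Definition GTV (r : nat) : finType := {x : bool * 'I_(2 ^ r.+1) | @gt_valid r x}.

Section GT.
Variable r : nat.

Definition gcopy (v : GTV r) : bool := (val v).1.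
Definition gidx (v : GTV r) : nat := val (val v).2.

Definition quasi_leaf (v : GTV r) : bool := 2 ^ r <= gidx v.

Definition inV1 (v : GTV r) : bool := ~~ quasi_leaf v && gcopy v.
Definition inV2 (v : GTV r) : bool := ~~ quasi_leaf v && ~~ gcopy v.

Definition V1 : {set GTV r} := [set v | inV1 v].

(* w is a child of u in one of the two trees *)
Definition gchild (u w : GTV r) : bool :=
  ((gidx w)./2 == gidx u) && ((gcopy u == gcopy w) || quasi_leaf w).

Definition gadj : rel (GTV r) := fun u w => gchild u w || gchild w u.

Definition nbhd (u : GTV r) : {set GTV r} := [set w | gadj u w].

Definition twin_quasi_leaves (a b : GTV r) : Prop :=
  [/\ quasi_leaf a, quasi_leaf b, a != b & nbhd a = nbhd b].

(* the leaves of T_v: quasi-leaves that are descendants of v *)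
Definition leaf_of_subtree (v w : GTV r) : bool :=
  quasi_leaf w && [exists k : 'I_r.+1, gidx w %/ 2 ^ k == gidx v].

(* p is a shortest u,v-path: the walk u :: p *)
Definition shortest_path (u v : GTV r) (p : seq (GTV r)) : Prop :=
  [/\ path gadj u p, last u p = v &
      forall q, path gadj u q -> last u q = v -> size p <= size q].

Definition S_visible (S : {set GTV r}) (u v : GTV r) : Prop :=
  exists p, shortest_path u v p /\
    forall x, x \in u :: p -> x \in S -> x = u \/ x = v.

Definition mutual_visibility (S : {set GTV r}) : Prop :=
  forall u v, u \in S -> v \in S -> S_visible S u v.

End GT.

From mathcomp Require Import all_boot zify.
Set Implicit Arguments. Unset Strict Implicit. Unset Printing Implicit Defensive.

(* Fix v in S ∩ V1 and another vertex u of S ∩ V1.  Removing v from T^(1)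
   leaves three parts: the subtrees of its two children and the rest.  A
   shortest S-visible path from u to any other x of S outside V2 avoids v, and
   it cannot pass through the position of v in T^(2) either: reaching T^(2)
   requires a detour through a quasi-leaf, and going through v instead would
   be shorter.  So every such x lies in the part of u, and one child subtree of
   v (or the whole subtree of v, if u is not below v) contains no vertex of S
   other than vertices of V2.  Assign to v the two leftmost leaves of that
   subtree; they are twins.  Two vertices receiving the same pair would be
   comparable, and the lower one would lie in the subtree the upper one chose
   as S-free. *)

Definition descendant (m c : nat) : Prop := exists j, m %/ 2 ^ j = c.

Lemma divn_exp2S m j : m %/ 2 ^ j.+1 = m./2 %/ 2 ^ j.
Proof. by rewrite expnS divnMA divn2. Qed.

Lemma divn_exp2Sr m j : m %/ 2 ^ j.+1 = (m %/ 2 ^ j)./2.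
Proof. by rewrite expnSr divnMA divn2. Qed.

Lemma divn_exp2D m i j : m %/ 2 ^ (i + j) = m %/ 2 ^ i %/ 2 ^ j.
Proof. by rewrite expnD divnMA. Qed.

Lemma descendant_refl m : descendant m m.
Proof. by exists 0; rewrite divn1. Qed.

Lemma descendant_trans m a b : descendant m a -> descendant a b -> descendant m b.
Proof. by move=> [i <-] [j <-]; exists (i + j); rewrite divn_exp2D. Qed.

Lemma descendant_leq m c : descendant m c -> c <= m.
Proof. by move=> [j <-]; apply: leq_div. Qed.

Lemma descendant_anti m c : descendant m c -> descendant c m -> m = c.
Proof. by move=> /descendant_leq mc /descendant_leq cm; apply/eqP; rewrite eqn_leq cm. Qed.

Lemma descendant_half m : descendant m m./2.
Proof. by exists 1; rewrite expn1 divn2. Qed.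

Lemma descendant_halfP m c : descendant m c -> m = c \/ descendant m./2 c.
Proof.
move=> [[|j] <-]; first by left; rewrite divn1.
by right; exists j; rewrite divn_exp2S.
Qed.

Lemma descendant_total m a b :
  descendant m a -> descendant m b -> descendant a b \/ descendant b a.
Proof.
move=> [i <-] [j <-]; case: (leqP i j) => ij.
- by left; exists (j - i); rewrite -divn_exp2D subnKC.
- by right; exists (i - j); rewrite -divn_exp2D subnKC // ltnW.
Qed.

Lemma descendant_child m n :
  descendant m n -> m <> n -> descendant m n.*2 \/ descendant m n.*2.+1.
Proof.
move=> [[|j] mj] mn; first by rewrite divn1 in mj.
have half_n : (m %/ 2 ^ j)./2 = n by rewrite -divn_exp2Sr.
have [E|E] : m %/ 2 ^ j = n.*2 \/ m %/ 2 ^ j = n.*2.+1 by lia.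
  by left; exists j.
by right; exists j.
Qed.

Lemma descendant_children_disjoint m n :
  0 < n -> descendant m n.*2 -> descendant m n.*2.+1 -> False.
Proof.
move=> n_gt0 m2n m2n1.
case: (descendant_total m2n m2n1) => [/descendant_leq|]; first lia.
by case/descendant_halfP => [|/descendant_leq]; lia.
Qed.

Lemma descendant_exp2_leq m c : 0 < c -> descendant m c -> exists2 j, 2 ^ j <= m & m %/ 2 ^ j = c.
Proof.
move=> c_gt0 [j mj]; exists j => //.
by rewrite -divn_gt0 ?expn_gt0 // mj.
Qed.

Definition descendantb (m c : nat) : bool := [exists j : 'I_m.+1, m %/ 2 ^ j == c].

Lemma descendantP m c : 0 < c -> reflect (descendant m c) (descendantb m c).
Proof.
move=> c_gt0; apply: (iffP existsP) => [[j /eqP mj] | /(descendant_exp2_leq c_gt0) [j jm mj]].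
  by exists j.
have j_lt : j < m.+1 by apply: leq_ltn_trans (ltnW (ltn_expl j (isT : 1 < 2))) _; rewrite ltnS.
by exists (Ordinal j_lt); rewrite /= mj.
Qed.

(* a and b lie in the same component of the tree with vertex n removed. *)
Definition same_side (n a b : nat) : Prop :=
  forall c, c./2 = n -> (descendant a c <-> descendant b c).

Lemma descendant_comparable_child n c k t :
  c./2 = n -> descendant k c -> descendant t n -> t <> n ->
  descendant t k \/ descendant k t -> descendant t c.
Proof.
move=> cn kc tn t_neq [tk | kt]; first exact: descendant_trans tk kc.
case: (descendant_total kt kc) => [// | /descendant_halfP [<- | ]].
  exact: descendant_refl.
by rewrite cn => /(descendant_anti tn).
Qed.

Definition subtree_avoiding (n m : nat) : nat :=
  if descendantb m n.*2 then n.*2.+1 else if descendantb m n.*2.+1 then n.*2 else n.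

Lemma subtree_avoiding_descendant n m : descendant (subtree_avoiding n m) n.
Proof.
have half_child c : c./2 = n -> descendant c n by move=> <-; apply: descendant_half.
rewrite /subtree_avoiding; case: ifP => _; first exact: half_child n.*2.+1 (uphalf_double n).
by case: ifP => _; [apply: half_child (doubleK n) | apply: descendant_refl].
Qed.

Lemma subtree_avoiding_lt r n m : 0 < n < 2 ^ r -> m < 2 ^ r -> subtree_avoiding n m < 2 ^ r.
Proof.
move=> /andP[n_gt0 n_lt] m_lt; rewrite /subtree_avoiding.
have r_gt0 : 0 < r by move: n_lt; case: (r) => //; rewrite expn0; lia.
have exp_even : 2 ^ r = (2 ^ r.-1).*2 by rewrite -mul2n -expnS prednK.
have n2_gt0 : 0 < n.*2 by rewrite double_gt0.
case: (descendantP m n2_gt0) => [/descendant_leq | _]; first lia.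
case: (descendantP m (ltn0Sn n.*2)) => [/descendant_leq | _] //; lia.
Qed.

Lemma subtree_avoiding_other_side n m k t :
  0 < n -> descendant k (subtree_avoiding n m) -> descendant t n -> t <> n ->
  descendant t k \/ descendant k t -> ~ same_side n m t.
Proof.
move=> n_gt0 + tn t_neq tk side; rewrite /subtree_avoiding.
have in_child c : c./2 = n -> descendant k c -> descendant t c.
  by move=> cn kc; apply: descendant_comparable_child tn t_neq tk.
have half0 : (n.*2)./2 = n by lia.
have half1 : (n.*2.+1)./2 = n by lia.
have n2_gt0 : 0 < n.*2 by rewrite double_gt0.
case: (descendantP m n2_gt0) => [m0 k1 | not_m0].
  apply: descendant_children_disjoint n_gt0 m0 _.
  by apply/(side _ half1); apply: in_child k1.
case: (descendantP m (ltn0Sn n.*2)) => [m1 k0 | not_m1 _].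
  apply: descendant_children_disjoint n_gt0 _ m1.
  by apply/(side _ half0); apply: in_child k0.
case: (descendant_child tn t_neq) => [t0 | t1].
- by apply: not_m0; apply/(side _ half0).
- by apply: not_m1; apply/(side _ half1).
Qed.

Definition leftmost (d c : nat) : nat := c * 2 ^ (d - trunc_log 2 c).

Lemma leftmost_descendant d c : descendant (leftmost d c) c.
Proof. by exists (d - trunc_log 2 c); rewrite mulnK ?expn_gt0. Qed.

Lemma leftmost_bounds d c : 0 < c < 2 ^ d.+1 -> 2 ^ d <= leftmost d c < 2 ^ d.+1.
Proof.
move=> /andP[c_gt0 c_lt]; rewrite /leftmost.
have /andP[lo hi] := trunc_log_bounds (isT : 1 < 2) c_gt0.
set L := trunc_log 2 c in lo hi *.
have Ld : L <= d by rewrite -ltnS -(ltn_exp2l _ _ (isT : 1 < 2)); apply: leq_ltn_trans lo c_lt.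
have -> : 2 ^ d.+1 = 2 ^ L.+1 * 2 ^ (d - L) by rewrite -expnD addSn subnKC.
have -> : 2 ^ d = 2 ^ L * 2 ^ (d - L) by rewrite -expnD subnKC.
by rewrite leq_mul2r ltn_mul2r lo hi expn_gt0 orbT.
Qed.

Definition heap_dist_le (x y l : nat) : Prop :=
  exists j1 j2, [/\ 0 < x %/ 2 ^ j1, x %/ 2 ^ j1 = y %/ 2 ^ j2 & j1 + j2 <= l].

Lemma heap_dist_le_refl x : 0 < x -> heap_dist_le x x 0.
Proof. by move=> x_gt0; exists 0, 0; rewrite divn1. Qed.

Lemma heap_dist_le_adj x y z l :
  0 < x -> y./2 = x \/ x./2 = y -> heap_dist_le y z l -> heap_dist_le x z l.+1.
Proof.
move=> x_gt0 [yx | xy] [[|i] [j [pos yz ij]]]; rewrite ?divn1 in pos yz.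
- by exists 0, j.+1; rewrite divn1 divn_exp2Sr -yz yx; split=> //; lia.
- by exists i, j; rewrite -yx -divn_exp2S; split=> //; lia.
- by exists 1, j; rewrite expn1 divn2 xy -yz; split=> //; lia.
- by exists i.+2, j; rewrite divn_exp2S xy; split=> //; lia.
Qed.

Lemma heap_dist_le_detour x y z l1 l2 :
  x < z -> y < z -> heap_dist_le x z l1 -> heap_dist_le z y l2 ->
  heap_dist_le x y (l1 + l2 - 2).
Proof.
move=> xz yz [a1 [b1 [P1 E1 L1]]] [a2 [b2 [P2 E2 L2]]].
have b1_gt0 : 0 < b1.
  by case: b1 E1 {L1} => // E1; move: (leq_div x (2 ^ a1)); rewrite E1 divn1; lia.
have a2_gt0 : 0 < a2.
  by case: a2 E2 P2 {L2} => // E2 _; move: (leq_div y (2 ^ b2)); rewrite -E2 divn1; lia.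
case: (leqP a2 b1) => a2b1.
- exists a1, (b2 + (b1 - a2)); split=> //; last lia.
  by rewrite E1 -{1}(subnKC a2b1) !divn_exp2D E2.
- exists (a1 + (a2 - b1)), b2; rewrite divn_exp2D E1 -divn_exp2D subnKC ?(ltnW a2b1) //.
  by split=> //; lia.
Qed.

Section GluedTree.
Variable r : nat.
Implicit Types (a b u v w x y z : GTV r) (p s : seq (GTV r)).
Local Notation adj := (@gadj r).

Lemma gidx_gt0 a : 0 < gidx a.
Proof. by case: a => [[c o] valid]; have /andP[] := valid. Qed.

Lemma gidx_lt a : gidx a < 2 ^ r.+1.
Proof. exact: ltn_ord. Qed.

Lemma quasi_leaf_copy a : quasi_leaf a -> gcopy a = false.
Proof.
case: a => [[[] o] valid] //; have /andP[_] := valid.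
by rewrite /quasi_leaf /gidx /= orbF ltnNge => /negbTE ->.
Qed.

Lemma gvertex_eq a b : gcopy a = gcopy b -> gidx a = gidx b -> a = b.
Proof.
case: a b => [[c o] ?] [[c' o'] ?]; rewrite /gcopy /gidx /= => cc' oo'.
by apply: val_inj; congr pair; last apply: val_inj.
Qed.

Lemma inV1_lt a : inV1 a -> gidx a < 2 ^ r.
Proof. by rewrite /inV1 /quasi_leaf -ltnNge => /andP[]. Qed.

Lemma inV1_copy a : inV1 a -> gcopy a.
Proof. by case/andP. Qed.

Lemma inV1_notV2 a : inV1 a -> ~~ inV2 a.
Proof. by rewrite /inV1 /inV2 => /andP[-> ->]. Qed.

Lemma leaf_of_subtreeP v w :
  0 < gidx v -> quasi_leaf w -> descendant (gidx w) (gidx v) -> leaf_of_subtree v w.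
Proof.
move=> v_gt0 w_leaf /(descendant_exp2_leq v_gt0) [j jw wj].
have j_lt : j < r.+1.
  by rewrite -(ltn_exp2l _ _ (isT : 1 < 2)); apply: leq_ltn_trans jw (ltn_ord _).
by rewrite /leaf_of_subtree w_leaf; apply/existsP; exists (Ordinal j_lt); rewrite /= wj.
Qed.

Lemma adj_sym : symmetric adj.
Proof. by move=> a b; rewrite /gadj orbC. Qed.

Lemma adj_gidx a b : adj a b -> (gidx b)./2 = gidx a \/ (gidx a)./2 = gidx b.
Proof. by case/orP => /andP[/eqP ? _]; [left | right]. Qed.

Lemma adj_copy a b : adj a b -> gcopy a != gcopy b -> quasi_leaf a || quasi_leaf b.
Proof.
by case/orP => /andP[_ /orP[/eqP -> | ->]]; rewrite ?eqxx ?orbT.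
Qed.

Lemma walk_same_side a p n :
  path adj a p -> (forall y, y \in a :: p -> gidx y != n) ->
  same_side n (gidx a) (gidx (last a p)).
Proof.
move=> + + c cn; elim: p a => [|b p IHp] a //= /andP[ab bp] avoid_n.
rewrite -IHp //; last by move=> y yp; apply: avoid_n; rewrite inE yp orbT.
have a_n : gidx a != n by apply: avoid_n; rewrite mem_head.
have b_n : gidx b != n by apply: avoid_n; rewrite !inE eqxx orbT.
case: (adj_gidx ab) => [ba | ab']; split.
- by apply: descendant_trans; rewrite -ba; apply: descendant_half.
- case/descendant_halfP => [bc | ]; last by rewrite ba.
  by move: a_n; rewrite -ba bc cn eqxx.
- case/descendant_halfP => [ac | ]; last by rewrite ab'.
  by move: b_n; rewrite -ab' ac cn eqxx.
- by apply: descendant_trans; rewrite -ab'; apply: descendant_half.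
Qed.

Lemma walk_crosses_leaf a p :
  path adj a p -> gcopy (last a p) != gcopy a -> has (@quasi_leaf r) (a :: p).
Proof.
elim: p a => [|b p IHp] a /=; first by rewrite eqxx.
move=> /andP[ab bp] copy_changed; have [ba | ba] := eqVneq (gcopy b) (gcopy a).
  by apply/orP; right; apply: IHp; rewrite // ba.
by rewrite orbA (adj_copy ab) // eq_sym.
Qed.

Lemma walk_heap_dist a p :
  path adj a p -> heap_dist_le (gidx a) (gidx (last a p)) (size p).
Proof.
elim: p a => [|b p IHp] a /=; first by move=> _; apply/heap_dist_le_refl/gidx_gt0.
case/andP=> ab /IHp; apply: heap_dist_le_adj (gidx_gt0 a) (adj_gidx ab).
Qed.

Lemma walk_via_leaf a p z :
  path adj a p -> z \in p -> quasi_leaf z -> gidx a < 2 ^ r -> gidx (last a p) < 2 ^ r ->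
  heap_dist_le (gidx a) (gidx (last a p)) (size p - 2).
Proof.
move=> + zp; case/splitPr: zp => p1 p2.
rewrite cat_path last_cat size_cat /= => /and3P[p1w p1z zp2].
rewrite /quasi_leaf => z_leaf a_lt p2_lt.
have d1 : heap_dist_le (gidx a) (gidx z) (size p1).+1.
  have p1zw : path adj a (rcons p1 z) by rewrite rcons_path p1w.
  by have := walk_heap_dist p1zw; rewrite last_rcons size_rcons.
have := heap_dist_le_detour (leq_trans a_lt z_leaf) (leq_trans p2_lt z_leaf) d1 (walk_heap_dist zp2).
by rewrite addSn addnS.
Qed.

(* The vertex with heap index h, taken in T^(1) unless it is a quasi-leaf;
   d is a junk default for out-of-range h. *)
Definition vtx d (h : nat) : GTV r := insubd d (h < 2 ^ r, insubd (val d).2 h).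

Lemma vtx_val d h : 0 < h < 2 ^ r.+1 -> gidx (vtx d h) = h /\ gcopy (vtx d h) = (h < 2 ^ r).
Proof.
move=> /andP[h_gt0 h_lt].
have valid : gt_valid (h < 2 ^ r, insubd (val d).2 h : 'I_(2 ^ r.+1)).
  by rewrite /gt_valid /= val_insubd h_lt h_gt0 /=; case: (h < 2 ^ r).
by rewrite /gidx /gcopy /vtx val_insubd valid /= val_insubd h_lt.
Qed.

Lemma vtx_gidx d a : ~~ inV2 a -> vtx d (gidx a) = a.
Proof.
have range : 0 < gidx a < 2 ^ r.+1 by rewrite gidx_gt0 gidx_lt.
have [idx copy] := vtx_val d range.
move=> not_V2; apply: gvertex_eq idx; rewrite copy.
case: (ltnP (gidx a) (2 ^ r)) => a_lt; last by rewrite quasi_leaf_copy.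
by move: not_V2; rewrite /inV2 /quasi_leaf leqNgt a_lt /= negbK.
Qed.

Lemma vtx_adj d h : 0 < h./2 -> h < 2 ^ r.+1 -> adj (vtx d h) (vtx d h./2).
Proof.
move=> h2_gt0 h_lt.
have [idx copy] : gidx (vtx d h) = h /\ gcopy (vtx d h) = (h < 2 ^ r) by apply: vtx_val; lia.
have [idx2 copy2] : gidx (vtx d h./2) = h./2 /\ gcopy (vtx d h./2) = (h./2 < 2 ^ r).
  by apply: vtx_val; lia.
rewrite /gadj /gchild idx idx2 copy copy2 /quasi_leaf idx eqxx /=.
apply/orP; right; case: (ltnP h (2 ^ r)) => h_lt'; last by rewrite orbT.
by rewrite orbF eqb_id; lia.
Qed.

Lemma vtx_up_walk d h k : 0 < h %/ 2 ^ k -> h < 2 ^ r.+1 ->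
  exists s, [/\ path adj (vtx d h) s, last (vtx d h) s = vtx d (h %/ 2 ^ k) & size s = k].
Proof.
elim: k h => [|k IHk] h; first by rewrite divn1 => _ _; exists [::].
rewrite divn_exp2S => pos h_lt.
have h2_gt0 : 0 < h./2 by move: pos; case: (h./2) => //; rewrite div0n.
have h2_lt : h./2 < 2 ^ r.+1 by lia.
have [s [sw sl ss]] := IHk h./2 pos h2_lt.
by exists (vtx d h./2 :: s); rewrite /= vtx_adj // sw sl ss.
Qed.

Lemma heap_dist_walk a b l :
  heap_dist_le (gidx a) (gidx b) l -> ~~ inV2 a -> ~~ inV2 b ->
  exists s, [/\ path adj a s, last a s = b & size s <= l].
Proof.
move=> [j1 [j2 [pos meet jl]]] a2 b2.
have [s1 [s1w s1l s1s]] := vtx_up_walk a pos (gidx_lt a).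
have pos_b : 0 < gidx b %/ 2 ^ j2 by rewrite -meet.
have [s2 [s2w s2l s2s]] := vtx_up_walk a pos_b (gidx_lt b).
rewrite !vtx_gidx // in s1w s1l s2w s2l.
exists (s1 ++ rev (belast b s2)); split.
- rewrite cat_path s1w s1l meet -s2l rev_path /=.
  by apply: sub_path s2w => x y; rewrite adj_sym.
- rewrite last_cat s1l meet -s2l; case: (s2) => //= x s'.
  by rewrite rev_cons last_rcons.
- by rewrite size_cat size_rev size_belast s1s s2s.
Qed.

Lemma vtx_leaf d l : 2 ^ r <= l < 2 ^ r.+1 -> gidx (vtx d l) = l /\ quasi_leaf (vtx d l).
Proof.
move=> /andP[lo hi]; have exp_gt0 : 0 < 2 ^ r by rewrite expn_gt0.
have l_range : 0 < l < 2 ^ r.+1 by lia.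
have [idx _] := vtx_val d l_range.
by rewrite /quasi_leaf idx.
Qed.

Lemma vtx_twins d k : 2 ^ r.-1 <= k < 2 ^ r ->
  twin_quasi_leaves (vtx d k.*2) (vtx d k.*2.+1).
Proof.
move=> /andP[lo hi]; have r_gt0 : 0 < r by move: lo hi; case: (r) => //; lia.
have exp_even : 2 ^ r = (2 ^ r.-1).*2 by rewrite -mul2n -expnS prednK.
have [idx0 leaf0] : gidx (vtx d k.*2) = k.*2 /\ quasi_leaf (vtx d k.*2).
  by apply: vtx_leaf; rewrite expnS; lia.
have [idx1 leaf1] : gidx (vtx d k.*2.+1) = k.*2.+1 /\ quasi_leaf (vtx d k.*2.+1).
  by apply: vtx_leaf; rewrite expnS; lia.
split=> //; first by apply/eqP => /(congr1 (@gidx r)); rewrite idx0 idx1; lia.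
apply/setP => w; rewrite !inE /gadj /gchild idx0 idx1 leaf0 leaf1 !orbT !andbT.
have w_lt := gidx_lt w; rewrite expnS in w_lt.
have -> : ((gidx w)./2 == k.*2) = false by apply/negbTE; lia.
have -> : ((gidx w)./2 == k.*2.+1) = false by apply/negbTE; lia.
by have -> : (k.*2.+1)./2 = (k.*2)./2 by lia.
Qed.

Section Visibility.
Variable S : {set GTV r}.
Hypothesis S_mv : mutual_visibility S.

Lemma mutual_visibility_same_side u v x :
  u \in S -> v \in S -> x \in S -> inV1 u -> inV1 v -> ~~ inV2 x -> u != v -> x != v ->
  same_side (gidx v) (gidx u) (gidx x).
Proof.
move=> uS vS xS u1 v1 x2 uv xv.
have [p [[pw pl p_min] p_vis]] := S_mv uS xS.
rewrite -pl; apply: (walk_same_side pw) => y yp; apply/eqP => yv_idx.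
have yv : y != v.
  apply/eqP => yv; rewrite yv in yp.
  by case: (p_vis v yp vS) => [vu | vx]; [move: uv | move: xv]; rewrite ?vu ?vx eqxx.
have y_copy : gcopy y = false.
  by apply: contraNF yv => y_copy; apply/eqP/gvertex_eq; rewrite ?(inV1_copy v1).
have {}yp : y \in p.
  by move: yp; rewrite inE => /predU1P [yu|//]; move: y_copy; rewrite yu (inV1_copy u1).
move: pw pl p_min; case/splitPr: yp => p1 p2 pw pl p_min.
have /andP[p1w p2w] : path adj u (rcons p1 y) && path adj y p2.
  by move: pw; rewrite -cat_rcons cat_path last_rcons.
have : has (@quasi_leaf r) (u :: rcons p1 y).
  by apply: walk_crosses_leaf p1w _; rewrite last_rcons y_copy (inV1_copy u1).
have u_internal : ~~ quasi_leaf u by case/andP: u1.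
rewrite /= (negbTE u_internal); case/hasP => z zp z_leaf.
have y_lt : gidx (last u (rcons p1 y)) < 2 ^ r by rewrite last_rcons yv_idx (inV1_lt v1).
have := walk_via_leaf p1w zp z_leaf (inV1_lt u1) y_lt.
rewrite last_rcons yv_idx size_rcons => d1.
have [s1 [s1w s1l s1s]] := heap_dist_walk d1 (inV1_notV2 u1) (inV1_notV2 v1).
have := walk_heap_dist p2w; rewrite yv_idx; move: pl; rewrite last_cat /= => -> d2.
have [s2 [s2w s2l s2s]] := heap_dist_walk d2 (inV1_notV2 v1) x2.
have := p_min (s1 ++ s2); rewrite cat_path s1w s1l s2w last_cat s1l s2l => /(_ isT erefl).
rewrite !size_cat /=; move: s1s s2s.
by move: (size p1) (size p2) (size s1) (size s2) => n1 n2 m1 m2; clear; lia.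
Qed.
End Visibility.

Section TwinPairs.
Variable S : {set GTV r}.
Hypothesis S_mv : mutual_visibility S.
Hypothesis S_V1_gt1 : 1 < #|S :&: V1 r|.
Hypothesis r_gt0 : 0 < r.

Definition partner v : GTV r := odflt v [pick w in S :&: V1 r | w != v].

Lemma partner_spec v : v \in S :&: V1 r -> partner v \in S :&: V1 r /\ partner v != v.
Proof.
rewrite /partner => vSV; case: pickP => [w /andP[] // | none].
have : S :&: V1 r \subset [set v].
  by apply/subsetP => w wSV; rewrite inE; move: (none w); rewrite wSV /= => /negbFE.
by move/subset_leq_card; rewrite cards1; lia.
Qed.

Lemma in_S_V1 v : v \in S :&: V1 r -> [/\ v \in S, inV1 v & 0 < gidx v < 2 ^ r].
Proof. by rewrite !inE => /andP[vS v1]; rewrite gidx_gt0 inV1_lt. Qed.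

Definition pair_parent v : nat :=
  leftmost r.-1 (subtree_avoiding (gidx v) (gidx (partner v))).

Lemma pair_parent_spec v : v \in S :&: V1 r ->
  2 ^ r.-1 <= pair_parent v < 2 ^ r /\ descendant (pair_parent v) (gidx v).
Proof.
move=> /[dup] /in_S_V1 [_ _ v_range] /partner_spec [/in_S_V1 [_ _ /andP[_ u_lt]] _].
have : 0 < subtree_avoiding (gidx v) (gidx (partner v)) < 2 ^ r.-1.+1.
  rewrite prednK // subtree_avoiding_lt // andbT.
  case/andP: v_range => v_gt0 _; apply: leq_trans v_gt0 _.
  exact/descendant_leq/subtree_avoiding_descendant.
move=> /leftmost_bounds; rewrite prednK // => range; split=> //.
exact: descendant_trans (leftmost_descendant _ _) (subtree_avoiding_descendant _ _).
Qed.

Lemma pair_parent_separated v x : v \in S :&: V1 r -> x \in S -> ~~ inV2 x ->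
  gidx x <> gidx v -> descendant (gidx x) (gidx v) ->
  descendant (gidx x) (pair_parent v) \/ descendant (pair_parent v) (gidx x) -> False.
Proof.
move=> vSV xS x2 xv_idx below comparable.
have [vS v1 /andP[v_gt0 _]] := in_S_V1 vSV.
have [/in_S_V1 [uS u1 _] uv] := partner_spec vSV.
have xv : x != v by apply/eqP => xv; rewrite xv in xv_idx.
apply: (subtree_avoiding_other_side v_gt0 (leftmost_descendant _ _) below xv_idx comparable).
exact (mutual_visibility_same_side S_mv uS vS xS u1 v1 x2 uv xv).
Qed.

Definition twin_pair v : GTV r * GTV r :=
  (vtx v (pair_parent v).*2, vtx v (pair_parent v).*2.+1).

Lemma twin_pair_leaf v l : v \in S :&: V1 r -> l./2 = pair_parent v ->
  [/\ gidx (vtx v l) = l, leaf_of_subtree v (vtx v l) & vtx v l \notin S].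
Proof.
move=> vSV lk; have [k_range k_below] := pair_parent_spec vSV.
have [_ v1 /andP[v_gt0 v_lt]] := in_S_V1 vSV.
have exp_even : 2 ^ r = (2 ^ r.-1).*2 by rewrite -mul2n -expnS prednK.
have [idx leaf] : gidx (vtx v l) = l /\ quasi_leaf (vtx v l).
  by apply: vtx_leaf; rewrite expnS; lia.
have l_below_k : descendant l (pair_parent v) by rewrite -lk; apply: descendant_half.
have l_below : descendant l (gidx v) := descendant_trans l_below_k k_below.
split=> //; first by apply: leaf_of_subtreeP; rewrite ?idx.
apply/negP => lS; apply: (pair_parent_separated vSV lS); rewrite ?idx //.
- by rewrite /inV2 leaf.
- lia.
- by left.
Qed.

Lemma twin_pair_spec v : v \in S :&: V1 r ->
  [/\ twin_quasi_leaves (twin_pair v).1 (twin_pair v).2,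
      leaf_of_subtree v (twin_pair v).1, leaf_of_subtree v (twin_pair v).2,
      (twin_pair v).1 \notin S & (twin_pair v).2 \notin S].
Proof.
move=> vSV; have [k_range _] := pair_parent_spec vSV.
have half1 k : k.*2.+1./2 = k := uphalf_double k.
have [_ leaf0 notS0] := twin_pair_leaf vSV (doubleK _).
have [_ leaf1 notS1] := twin_pair_leaf vSV (half1 _).
by split=> //; apply: vtx_twins.
Qed.

Lemma pair_parent_inj v w : v \in S :&: V1 r -> w \in S :&: V1 r ->
  pair_parent v = pair_parent w -> v = w.
Proof.
move=> vSV wSV vw_k; have [_ v_k] := pair_parent_spec vSV; have [_ w_k] := pair_parent_spec wSV.
have [_ v1 _] := in_S_V1 vSV; have [_ w1 _] := in_S_V1 wSV.
have [// | /eqP vw] := eqVneq v w; exfalso.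
have vw_idx : gidx v <> gidx w.
  by move/(gvertex_eq (etrans (inV1_copy v1) (esym (inV1_copy w1)))).
have [vS _ _] := in_S_V1 vSV; have [wS _ _] := in_S_V1 wSV.
rewrite vw_k in v_k; case: (descendant_total v_k w_k) => [vw_below | wv_below].
- by apply: (pair_parent_separated wSV vS (inV1_notV2 v1) vw_idx vw_below); right.
- apply: (pair_parent_separated vSV wS (inV1_notV2 w1) (nesym vw_idx) wv_below).
  by right; rewrite vw_k.
Qed.

Lemma twin_pair_disjoint v w : v \in S :&: V1 r -> w \in S :&: V1 r -> v != w ->
  [disjoint [:: (twin_pair v).1; (twin_pair v).2] & [:: (twin_pair w).1; (twin_pair w).2]].
Proof.
move=> vSV wSV /eqP vw; have k_neq : pair_parent v <> pair_parent w.
  by move/(pair_parent_inj vSV wSV).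
have half1 k : k.*2.+1./2 = k := uphalf_double k.
have [v0 _ _] := twin_pair_leaf vSV (doubleK _).
have [v1 _ _] := twin_pair_leaf vSV (half1 _).
have [w0 _ _] := twin_pair_leaf wSV (doubleK _).
have [w1 _ _] := twin_pair_leaf wSV (half1 _).
have neq a b : gidx a <> gidx b -> (a == b) = false by move=> ab; apply/eqP => /(congr1 (@gidx r)).
rewrite disjoint_has /= !inE /= !neq ?v0 ?v1 ?w0 ?w1 //; lia.
Qed.
End TwinPairs.
End GluedTree.

Theorem mainTheorem2 (r : nat) (S : {set GTV r}) :
  2 <= r ->
  mutual_visibility S ->
  2 <= #|S :&: V1 r| ->
  exists f : GTV r -> GTV r * GTV r,
    (forall v, v \in S :&: V1 r ->
       [/\ twin_quasi_leaves (f v).1 (f v).2,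
           leaf_of_subtree v (f v).1, leaf_of_subtree v (f v).2,
           (f v).1 \notin S & (f v).2 \notin S]) /\
    (forall v w, v \in S :&: V1 r -> w \in S :&: V1 r -> v != w ->
       [disjoint [:: (f v).1; (f v).2] & [:: (f w).1; (f w).2]]).
Proof.
move=> r_ge2 S_mv S_V1_gt1; have r_gt0 : 0 < r := ltnW r_ge2.
exists (twin_pair S); split=> [v | v w].
- exact: twin_pair_spec.
- exact: twin_pair_disjoint.
Qed.
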